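(* Consider any finite game in extensive form with perfect recall. Let $\bar\beta^1=(\bar\beta^1_i)_{i\in N}$ be a profile of full-support belief systems and let $\beta^1=(\beta^1_i)_{i\in N}$ be a profile of full-support beliefs in the associated normal form that is consistent with $\bar\beta^1$. Then for every player $i\in N$, $\bar L_i^1(\bar\beta^1)=L_i^1(\beta^1)$.
   Context: Setting: a finite extensive-form game with finite player set $N$, possibly moves of nature $c$ (treated as a player with singleton information sets, indifferent among outcomes), possibly simultaneous moves, imperfect information, finite horizon and perfect recall. $Z$ is the set of terminal histories; $u_i:Z\to\mathbb{R}$ is player $i$'s (Bernoulli) utility; $\mathcal{I}_i$ is the set of information sets of player $i$ and $A_i(I_i)$ the actions at $I_i$. A strategy $s_i$ assigns to each $I_i\in\mathcal{I}_i$ an action in $A_i(I_i)$; $S_i$ is the set of strategies, $S_{-i}$ is the product of the strategy sets of all other players together with nature (if nature moves). $z(s)$ is the terminal history reached by profile $s$. A profile $s_{-i}$ reaches $I_i$ if there is $s_i$ such that $(s_i,s_{-i})$ reaches $I_i$; $s_i$ reaches $I_i$ if there is $s_{-i}$ with $(s_i,s_{-i})$ reaching $I_i$. Let $S_{-i}(I_i)$ be the set of $s_{-i}$ reaching $I_i$. A belief system of $i$ is $\bar\beta_i=(\bar\beta_i(I_i))_{I_i\in\mathcal I_i}$ with $\bar\beta_i(I_i)\in\Delta(S_{-i})$, $\bar\beta_i(I_i)(S_{-i}(I_i))=1$, and such that if $I_i$ precedes $I_i'$ then $\bar\beta_i(I_i')$ is obtained from $\bar\beta_i(I_i)$ by conditioning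 on $S_{-i}(I_i')$ whenever this event has positive probability. It is full-support if each $\bar\beta_i(I_i)$ assigns positive probability to every element of $S_{-i}(I_i)$. A strategy $s_i'$ is an $I_i$-replacement of $s_i$ if it agrees with $s_i$ on all information sets strictly preceding $I_i$. Strategy $s_i$ is rational at $I_i$ with belief system $\bar\beta_i$ if either $s_i$ does not reach $I_i$, or no $I_i$-replacement of $s_i$ yields strictly higher expected utility $\sum_{s_{-i}}\bar\beta_i(I_i)(s_{-i})u_i(z(\cdot,s_{-i}))$ than $s_i$. Strong level-1: $\bar L_i^1(\bar\beta^1)=\{s_i\in S_i: s_i\text{ is rational at every } I_i\in\mathcal I_i \text{ with } \bar\beta^1_i\}$. Associated normal form: action sets $S_i$, utilities $s\mapsto u_i(z(s))$ (expected over nature if relevant via beliefs on $S_{-i}$). A belief $\beta^1_i\in\Delta(S_{-i})$ is full-support if it gives positive probability to every element of $S_{-i}$; it is consistent with $\bar\beta^1_i$ if $\bar\beta^1_i(I_i)=\beta^1_i(\cdot\mid S_{-i}(I_i))$ for every $I_i\in\mathcal I_i$. Normal-form level-1: $L_i^1(\beta^1)=\{s_i\in S_i: s_i \text{ maximizes } \sum_{s_{-i}}\beta^1_i(s_{-i})u_i(z(s_i,s_{-i}))\}$. *)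

From HB Require Import structures.
From mathcomp Require Import all_boot all_order all_algebra.
Import Order.TTheory GRing.Theory Num.Theory.
Local Open Scope ring_scope.

(* Raw data of a finite extensive-form game.
   - [mover]: players together with (possibly) nature; [is_player] singles out N.
   - [infoset j], [action j I]: information sets of mover j and actions A_j(I).
   - [node]: the finite set of histories (nodes of the game tree), [root] = empty history.
   - [iset j h = Some I] iff mover j is active at h and h belongs to I.
     A node where no mover is active is terminal.
   - [succ h s]: the child of the non-terminal node h reached when the active
     movers play according to the (full) strategy profile s; well-formedness
     requires it to depend only on the actions s_j(I_j(h)) of active movers,
     and different action profiles to give different children. *)
Record egame := EGame {
  mover : finType;
  is_player : pred mover;
  infoset : mover -> finType;
  action : forall j : mover, infoset j -> finType;
  node : finType;
  root : node;
  iset : forall j : mover, node -> option (infoset j);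
  succ : node -> (forall j : mover, {dffun forall I : infoset j, action j I}) -> node
}.

Set Implicit Arguments. Unset Strict Implicit. Unset Printing Implicit Defensive.

Section Game.
Variable G : egame.

Definition strat (j : mover G) := {dffun forall I : infoset G j, action G j I}.
Definition profile := forall j : mover G, strat j.

Definition terminal (h : node G) : bool := [forall j, iset G j h == None].
Definition step (s : profile) (h : node G) : node G :=
  if terminal h then h else succ G h s.
Definition play (s : profile) (n : nat) : node G := iter n (step s) (root G).
(* z(s): the terminal history reached by s (the horizon is < #|node G|) *)
Definition outcome (s : profile) : node G := play s #|node G|.

Definition agree_at (h : node G) (s s' : profile) : Prop :=
  forall j I, iset G j h = Some I -> s j I = s' j I.

Definition experience (j : mover G) (s : profile) (n : nat)
  : seq {I : infoset G j & action G j I} :=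
  pmap (fun k => if iset G j (play s k) is Some J
                 then Some (Tagged (action G j) (s j J)) else None) (iota 0 n).

Record wf_game : Prop := {
  wf_root : forall h s, ~~ terminal h -> succ G h s <> root G;
  wf_parent : forall h h' s s', ~~ terminal h -> ~~ terminal h' ->
      succ G h s = succ G h' s' -> h = h';
  wf_local : forall h s s', agree_at h s s' -> succ G h s = succ G h s';
  wf_distinct : forall h s s', succ G h s = succ G h s' -> agree_at h s s';
  wf_reach : forall h, exists s n, play s n = h;
  wf_infoset_ne : forall j I, exists h, iset G j h = Some I;
  wf_action_ne : forall j I, (0 < #|{: action G j I}|)%N;
  wf_one_nature : forall c c', ~~ is_player G c -> ~~ is_player G c' -> c = c';
  wf_nature_singleton : forall c h h' I, ~~ is_player G c ->
      iset G c h = Some I -> iset G c h' = Some I -> h = h';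
  wf_perfect_recall : forall j s s' n n' I, is_player G j ->
      iset G j (play s n) = Some I -> iset G j (play s' n') = Some I ->
      experience j s n = experience j s' n'
}.

(* S_{-i}: strategies of all other movers (other players and nature) *)
Definition oprof (i : mover G) :=
  {dffun forall k : {j : mover G | j != i}, strat (val k)}.

Definition join (i : mover G) (si : strat i) (sm : oprof i) : profile :=
  fun j => match j =P i with
           | ReflectT e => eq_rect_r strat si e
           | ReflectF ne => sm (exist (fun j => j != i) j (introN eqP ne))
           end.

(* a profile reaches I_j (plays have length < #|node G|) *)
Definition reaches (j : mover G) (s : profile) (I : infoset G j) : bool :=
  [exists n : 'I_#|node G|, iset G j (play s n) == Some I].
Definition reachesO (i : mover G) (I : infoset G i) : pred (oprof i) :=
  fun sm => [exists si, reaches (join si sm) I].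
Definition reachesS (i : mover G) (si : strat i) (I : infoset G i) : bool :=
  [exists sm, reaches (join si sm) I].

Definition precedes (j : mover G) (I I' : infoset G j) : Prop :=
  exists s m n, (m < n)%N /\ iset G j (play s m) = Some I /\
                iset G j (play s n) = Some I'.

Variable R : realFieldType.

Definition prob (i : mover G) (b : {ffun oprof i -> R}) (E : pred (oprof i)) : R :=
  \sum_(sm | E sm) b sm.
Definition is_dist (i : mover G) (b : {ffun oprof i -> R}) : Prop :=
  (forall sm, 0 <= b sm) /\ \sum_sm b sm = 1.
Definition cond (i : mover G) (b : {ffun oprof i -> R}) (E : pred (oprof i))
  : {ffun oprof i -> R} :=
  [ffun sm => if E sm then b sm / prob b E else 0].

Definition belief_system (i : mover G) (bb : infoset G i -> {ffun oprof i -> R}) : Prop :=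
  (forall I, is_dist (bb I)) /\
  (forall I, prob (bb I) (reachesO I) = 1) /\
  (forall I I', precedes I I' -> 0 < prob (bb I) (reachesO I') ->
       bb I' = cond (bb I) (reachesO I')).
Definition full_support_system (i : mover G) (bb : infoset G i -> {ffun oprof i -> R}) : Prop :=
  forall I sm, reachesO I sm -> 0 < bb I sm.

Definition full_support (i : mover G) (b : {ffun oprof i -> R}) : Prop :=
  forall sm, 0 < b sm.
Definition consistent (i : mover G) (b : {ffun oprof i -> R})
    (bb : infoset G i -> {ffun oprof i -> R}) : Prop :=
  forall I, bb I = cond b (reachesO I).

Definition EU (i : mover G) (ui : node G -> R) (b : {ffun oprof i -> R}) (si : strat i) : R :=
  \sum_sm b sm * ui (outcome (join si sm)).

Definition replacement (i : mover G) (I : infoset G i) (si si' : strat i) : Prop :=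
  forall I', precedes I' I -> si' I' = si I'.

Definition rational_at (i : mover G) (ui : node G -> R)
    (bb : infoset G i -> {ffun oprof i -> R}) (si : strat i) (I : infoset G i) : Prop :=
  ~~ reachesS si I \/
  forall si', replacement I si si' -> ~ (EU ui (bb I) si < EU ui (bb I) si').

Definition strong_L1 (i : mover G) (ui : node G -> R)
    (bb : infoset G i -> {ffun oprof i -> R}) (si : strat i) : Prop :=
  forall I, rational_at ui bb si I.
Definition nf_L1 (i : mover G) (ui : node G -> R) (b : {ffun oprof i -> R})
    (si : strat i) : Prop :=
  forall si', EU ui b si' <= EU ui b si.

End Game.

From HB Require Import structures.
From mathcomp Require Import all_boot all_order all_algebra.
From Stdlib Require Import ClassicalEpsilon.
Import Order.TTheory GRing.Theory Num.Theory.
Local Open Scope ring_scope.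
Set Implicit Arguments. Unset Strict Implicit. Unset Printing Implicit Defensive.

(* By perfect recall, the plays reaching an information set I of i are exactly those of
   the profiles (s_i, s_{-i}) with s_i reaching I and s_{-i} in S_{-i}(I).
   Normal form => strong: if an I-replacement s_i' of s_i did better against b conditioned
   on S_{-i}(I), switching from s_i to s_i' at I and after I changes outcomes only on
   S_{-i}(I), where it reproduces s_i'; so the switched strategy would beat s_i.
   Strong => normal form: partition S_{-i} by the first information set of i met along the
   play of s_i.  Such a set I has no predecessor, so its block is all of S_{-i}(I) and every
   strategy is an I-replacement; full support makes P(S_{-i}(I)) > 0, and the conditional
   inequalities sum over the blocks to normal-form optimality. *)

(* [join] matches on [j =P i] and its branches mention that very proof, so [case]
   cannot abstract it; these two lemmas evaluate such a match instead. *)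
Lemma reflect_match_true (P : Prop) b (r : reflect P b) (A : Type)
    (f : P -> A) (g : ~ P -> A) (p : P) :
  (forall e e', f e = f e') ->
  match r with ReflectT e => f e | ReflectF ne => g ne end = f p.
Proof. by case: r => [e|ne] // _; case: ne. Qed.

Lemma reflect_match_false (P : Prop) b (r : reflect P b) (A : Type)
    (f : P -> A) (g : ~ P -> A) (np : ~ P) :
  (forall ne ne', g ne = g ne') ->
  match r with ReflectT e => f e | ReflectF ne => g ne end = g np.
Proof. by case: r => [e|ne] // _; case: np. Qed.

Section Plays.
Variable G : egame.
Hypothesis wfG : wf_game G.

Lemma join_self (i : mover G) (si : strat i) (sm : oprof i) : join si sm i = si.
Proof.
rewrite /join (reflect_match_true _ _ (erefl i)) // => e e'.
by rewrite (eq_irrelevance e e').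
Qed.

Lemma join_other (i j : mover G) (si si' : strat i) (sm : oprof i) :
  j != i -> join si sm j = join si' sm j.
Proof.
move=> /eqP ne; rewrite /join !(reflect_match_false _ _ ne) // => e e'.
all: by rewrite (bool_irrelevance (introN eqP e) (introN eqP e')).
Qed.

Lemma play_eq_upto (s s' : profile G) k :
  (forall k', (k' < k)%N -> agree_at (play s k') s s') -> play s k = play s' k.
Proof.
elim: k => [//|k IH] agree.
have e : play s k = play s' k by apply: IH => k' lt; apply: agree; apply: ltn_trans lt _.
rewrite /play !iterS -/(play s k) -/(play s' k) -e /step.
by case: ifP => // _; apply: (wf_local wfG); apply: agree.
Qed.

Lemma agree_at_join (i : mover G) (si si' : strat i) (sm : oprof i) h :
  (forall J, iset G i h = Some J -> si J = si' J) ->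
  agree_at h (join si sm) (join si' sm).
Proof.
move=> eq_si j; have [->|ne] := eqVneq j i.
  by move=> I hI; rewrite !join_self; apply: eq_si.
by move=> I _; rewrite (join_other si si' sm ne).
Qed.

Lemma play_join_eq (i : mover G) (si si' : strat i) (sm : oprof i) k :
  (forall k' J, (k' < k)%N -> iset G i (play (join si sm) k') = Some J -> si J = si' J) ->
  play (join si sm) k = play (join si' sm) k.
Proof.
by move=> eq_si; apply: play_eq_upto => k' lt; apply: agree_at_join => J; apply: eq_si.
Qed.

Section PerfectRecall.
Variable i : mover G.
Hypothesis i_player : is_player G i.

Lemma mem_experience (s : profile G) k n J :
  (k < n)%N -> iset G i (play s k) = Some J ->
  Tagged (action G i) (s i J) \in experience i s n.
Proof.
move=> lt sJ; rewrite /experience mem_pmap.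
by apply/mapP; exists k; rewrite ?mem_iota ?sJ.
Qed.

Lemma mem_experienceP (s : profile G) n J (a : action G i J) :
  Tagged (action G i) a \in experience i s n ->
  exists2 k, (k < n)%N & iset G i (play s k) = Some J /\ s i J = a.
Proof.
rewrite /experience mem_pmap => /mapP[k]; rewrite mem_iota add0n /= => lt.
case sJ': (iset G i (play s k)) => [J'|//] /Some_inj eT.
have eJ : J' = J by move: (congr1 tag eT).
by subst J'; exists k => //; split => //; apply/esym/eq_from_Tagged.
Qed.

Lemma precedes_visited (J I : infoset G i) (s : profile G) n :
  precedes J I -> iset G i (play s n) = Some I ->
  exists2 k, (k < n)%N & iset G i (play s k) = Some J.
Proof.
case=> s0 [m [n0 [lt_m [s0J s0I]]]] sI.
have := mem_experience lt_m s0J; rewrite (wf_perfect_recall wfG i_player s0I sI).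
by case/mem_experienceP => k lt_k [sJ _]; exists k.
Qed.

(* Perfect recall makes the reachability of [I] a product condition. *)
Lemma play_join_reaches (si si1 : strat i) (sm sm0 : oprof i) n0 n1 I :
  iset G i (play (join si sm0) n0) = Some I ->
  iset G i (play (join si1 sm) n1) = Some I ->
  iset G i (play (join si sm) n1) = Some I.
Proof.
move=> s0I s1I; rewrite -s1I; congr (iset G i _).
symmetry; apply: play_join_eq => k J lt_k s1J.
have := mem_experience lt_k s1J; rewrite join_self.
rewrite -(wf_perfect_recall wfG i_player s0I s1I).
by case/mem_experienceP => k' _ [_]; rewrite join_self.
Qed.

Lemma play_replacement (I : infoset G i) (si si' : strat i) (sm : oprof i) n :
  replacement I si si' -> iset G i (play (join si sm) n) = Some I ->
  play (join si' sm) n = play (join si sm) n.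
Proof.
move=> rep sI; symmetry; apply: play_join_eq => k J lt_k sJ.
by symmetry; apply: rep; exists (join si sm), k, n.
Qed.

Definition switch_at (I : infoset G i) (si si' : strat i) : strat i :=
  finfun (fun J : infoset G i =>
    if excluded_middle_informative (J = I \/ precedes I J) then si' J else si J).

Lemma outcome_switch_reached (I : infoset G i) (si si' : strat i) (sm : oprof i) n :
  replacement I si si' -> iset G i (play (join si sm) n) = Some I ->
  outcome (join (switch_at I si si') sm) = outcome (join si' sm).
Proof.
move=> rep sI; have s'I := sI; rewrite -(play_replacement rep sI) in s'I.
symmetry; apply: play_join_eq => k J _ s'J; rewrite ffunE.
case: excluded_middle_informative => // notIJ.
case: (ltngtP k n) => [lt_k|gt_k|e_k].
- by apply: rep; exists (join si' sm), k, n.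
- by case: notIJ; right; exists (join si' sm), n, k.
- by case: notIJ; left; move: s'J; rewrite e_k s'I => -[].
Qed.

Lemma outcome_switch_unreached (I : infoset G i) (si si' : strat i) (sm : oprof i) :
  ~~ reachesO I sm -> outcome (join (switch_at I si si') sm) = outcome (join si sm).
Proof.
move=> /negP notR; symmetry; apply: play_join_eq => k J lt_k sJ; rewrite ffunE.
case: excluded_middle_informative => // -[eJ|IJ]; case: notR.
  by subst J; apply/existsP; exists si; apply/existsP; exists (Ordinal lt_k); rewrite sJ.
have [k' lt_k' sI] := precedes_visited IJ sJ.
by apply/existsP; exists si; apply/existsP; exists (Ordinal (ltn_trans lt_k' lt_k)); rewrite sI.
Qed.

Definition initial (I : infoset G i) : Prop := forall J, ~ precedes J I.

(* [#|node G|] when [i] never moves along [s]. *)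
Definition first_move (s : profile G) : nat :=
  find (fun k => iset G i (play s k) != None) (iota 0 #|node G|).

Definition first_infoset (s : profile G) : option (infoset G i) :=
  if (first_move s < #|node G|)%N then iset G i (play s (first_move s)) else None.

Lemma first_move_le (s : profile G) : (first_move s <= #|node G|)%N.
Proof. by rewrite -[X in (_ <= X)%N](size_iota 0) find_size. Qed.

Lemma first_move_visited (s : profile G) :
  (first_move s < #|node G|)%N -> iset G i (play s (first_move s)) != None.
Proof.
move=> lt; have := @nth_find _ 0%N (fun k => iset G i (play s k) != None) (iota 0 #|node G|).
by rewrite has_find size_iota nth_iota // add0n; apply.
Qed.

Lemma before_first_move (s : profile G) k :
  (k < first_move s)%N -> iset G i (play s k) = None.
Proof.
move=> lt; have := before_find 0%N lt.
by rewrite nth_iota ?add0n ?(leq_trans lt (first_move_le s)) // => /negPn/eqP.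
Qed.

Lemma first_move_eq (s : profile G) n :
  (n < #|node G|)%N -> iset G i (play s n) != None ->
  (forall k, (k < n)%N -> iset G i (play s k) = None) -> first_move s = n.
Proof.
move=> lt_n sn before; apply/eqP; rewrite eqn_leq; apply/andP; split.
  by rewrite leqNgt; apply/negP => /before_first_move/eqP; apply/negP.
rewrite leqNgt; apply/negP => lt.
by move: (first_move_visited (ltn_trans lt lt_n)); rewrite before.
Qed.

Lemma first_infoset_None (s : profile G) k :
  first_infoset s = None -> (k < #|node G|)%N -> iset G i (play s k) = None.
Proof.
rewrite /first_infoset => + lt_k; case: ifP => [lt_fm sfm|/negbT].
  by move: (first_move_visited lt_fm); rewrite sfm.
by rewrite -leqNgt => le_fm _; apply: before_first_move; apply: leq_trans lt_k le_fm.
Qed.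

Lemma first_infoset_reaches (s : profile G) I :
  first_infoset s = Some I -> reaches s I.
Proof.
rewrite /first_infoset; case: ifP => // lt sI.
by apply/existsP; exists (Ordinal lt); rewrite sI.
Qed.

Lemma first_infoset_initial (s : profile G) I : first_infoset s = Some I -> initial I.
Proof.
rewrite /first_infoset; case: ifP => // _ sI J JI.
have [k lt_k sJ] := precedes_visited JI sI.
by rewrite before_first_move in sJ.
Qed.

Lemma reachesO_first_infoset (I : infoset G i) (si : strat i) (sm : oprof i) :
  initial I -> reachesO I sm = (first_infoset (join si sm) == Some I).
Proof.
move=> initI; apply/idP/eqP => [|/first_infoset_reaches sI]; last first.
  by apply/existsP; exists si.
case/existsP=> si1 /existsP[n1 /eqP s1I].
have no_move k : (k < n1)%N -> iset G i (play (join si1 sm) k) = None.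
  move=> lt_k; case s1J: iset => [J|//]; case: (initI J).
  by exists (join si1 sm), k, n1.
have e_play k : (k <= n1)%N -> play (join si sm) k = play (join si1 sm) k.
  move=> le_k; symmetry; apply: play_join_eq => k' J lt_k'.
  by rewrite no_move // (leq_trans lt_k' le_k).
have sI : iset G i (play (join si sm) n1) = Some I by rewrite e_play.
rewrite /first_infoset (@first_move_eq _ n1) ?ltn_ord ?sI // => k lt_k.
by rewrite e_play ?(ltnW lt_k) // no_move.
Qed.

Lemma outcome_first_infoset_None (si si' : strat i) (sm : oprof i) :
  first_infoset (join si sm) = None -> outcome (join si' sm) = outcome (join si sm).
Proof.
move=> none; symmetry; apply: play_join_eq => k J lt_k.
by rewrite first_infoset_None.
Qed.

Section Beliefs.
Variables (R : realFieldType) (u : node G -> R) (b : {ffun oprof i -> R}).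

Definition EU_on (P : pred (oprof i)) (si : strat i) : R :=
  \sum_(sm | P sm) b sm * u (outcome (join si sm)).

Lemma EU_onC (P : pred (oprof i)) (si : strat i) :
  EU u b si = EU_on P si + EU_on (predC P) si.
Proof. by rewrite /EU /EU_on (bigID P). Qed.

Lemma EU_cond (P : pred (oprof i)) (si : strat i) :
  EU u (cond b P) si = (prob b P)^-1 * EU_on P si.
Proof.
rewrite /EU /EU_on (bigID P) /= [X in _ + X]big1 => [|sm /negbTE nP]; last first.
  by rewrite ffunE nP mul0r.
rewrite addr0 mulr_sumr; apply: eq_bigr => sm Psm.
by rewrite ffunE Psm mulrAC mulrC.
Qed.

Lemma nf_L1_rational_at (bb : infoset G i -> {ffun oprof i -> R}) si I :
  (forall sm, 0 <= b sm) -> bb I = cond b (reachesO I) ->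
  nf_L1 u b si -> rational_at u bb si I.
Proof.
move=> b_ge0 bbI nf; case: (boolP (reachesS si I)); last by left.
case/existsP=> sm0 /existsP[n0 /eqP s0I]; right=> si' rep.
have prob_ge0 : 0 <= prob b (reachesO I) by apply: sumr_ge0.
apply/negP; rewrite -leNgt bbI !EU_cond ler_wpM2l ?invr_ge0 //.
have := nf (switch_at I si si'); rewrite !(EU_onC (reachesO I)).
have -> : EU_on (reachesO I) (switch_at I si si') = EU_on (reachesO I) si'.
  apply: eq_bigr => sm /existsP[si1 /existsP[n1 /eqP s1I]].
  by rewrite (outcome_switch_reached rep (play_join_reaches s0I s1I)).
have -> : EU_on (predC (reachesO I)) (switch_at I si si') = EU_on (predC (reachesO I)) si.
  by apply: eq_bigr => sm /outcome_switch_unreached ->.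
by rewrite lerD2r.
Qed.

Lemma rational_at_initial (bb : infoset G i -> {ffun oprof i -> R}) si si' I :
  (forall sm, 0 < b sm) -> bb I = cond b (reachesO I) -> initial I ->
  reachesS si I -> rational_at u bb si I ->
  EU_on (reachesO I) si' <= EU_on (reachesO I) si.
Proof.
move=> b_gt0 bbI initI rS [/negP//|opt].
have prob_gt0 : 0 < prob b (reachesO I).
  have /existsP[sm sI] := rS.
  rewrite /prob (bigD1 sm) /=; last by apply/existsP; exists si.
  by rewrite ltr_pwDl ?b_gt0 ?sumr_ge0 // => sm' _; apply: ltW.
have := opt si' (fun J JI => False_ind _ (initI J JI)).
by move/negP; rewrite -leNgt bbI !EU_cond ler_pM2l ?invr_gt0.
Qed.

Lemma strong_L1_nf (bb : infoset G i -> {ffun oprof i -> R}) si :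
  (forall sm, 0 < b sm) -> (forall I, bb I = cond b (reachesO I)) ->
  strong_L1 u bb si -> nf_L1 u b si.
Proof.
move=> b_gt0 cons st si'; pose F sm := first_infoset (join si sm).
rewrite /EU (partition_big F predT) // [X in _ <= X](partition_big F predT) //=.
apply: ler_sum => -[I|] _; last first.
  rewrite (eq_bigr (fun sm => b sm * u (outcome (join si sm)))) ?lexx // => sm /eqP.
  by move/(outcome_first_infoset_None si') ->.
have [sm0 /eqP F0|none] := pickP (fun sm => F sm == Some I); last by rewrite !big_pred0.
have initI := first_infoset_initial F0.
have classI sm : (F sm == Some I) = reachesO I sm by rewrite (reachesO_first_infoset si).
rewrite !(eq_bigl _ _ classI); apply: rational_at_initial (cons I) initI _ (st I) => //.
by apply/existsP; exists sm0; apply: first_infoset_reaches.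
Qed.

End Beliefs.
End PerfectRecall.
End Plays.

Theorem proposition3 (R : realFieldType) (G : egame)
  (u : forall j : mover G, node G -> R)
  (bb : forall i : mover G, infoset G i -> {ffun oprof i -> R})
  (b : forall i : mover G, {ffun oprof i -> R}) :
  wf_game G ->
  (forall i, is_player G i -> belief_system (bb i) /\ full_support_system (bb i)) ->
  (forall i, is_player G i ->
     [/\ is_dist (b i), full_support (b i) & consistent (b i) (bb i)]) ->
  forall i : mover G, is_player G i ->
    forall si : strat i, strong_L1 (u i) (bb i) si <-> nf_L1 (u i) (b i) si.
Proof.
move=> wfG _ beliefs i i_player si.
have [[b_ge0 _] b_gt0 cons] := beliefs i i_player.
split; first exact: strong_L1_nf.
by move=> nf I; apply: nf_L1_rational_at.
Qed.
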